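(* (a) For every $n\ge0$, the number of words $w\in\mathbb{P}^*$ with letter sum $n$ into which $121$ does not embed equals $\frac{n(n-1)}{2}+1$. (b) For every $n\ge1$, the number of words $w\in\mathcal{S}(121)$ with letter sum $3+n$ equals $\frac{n(n+1)(n+2)}{6}$.
   Context: $\mathbb{P}^*$ is the set of finite words over the positive integers. An embedding of $u$ into $w$ is a string of $|u|$ consecutive letters of $w$ whose $k$-th letter is $\ge$ the $k$-th letter of $u$ for every $k$. $\mathcal{S}(u)$ is the set of words $w$ admitting an embedding of $u$ such that the last $|u|$ letters of $w$ form the only embedding of $u$ into $w$. The letter sum of $w=w_1\ldots w_m$ is $\sum_k w_k$. *)

(* Words over positive integers are represented as
   sequences of naturals all of whose letters are positive. *)
From mathcomp Require Import all_boot.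
Set Implicit Arguments. Unset Strict Implicit. Unset Printing Implicit Defensive.

Definition pword (w : seq nat) : bool := all (fun x => 0 < x) w.

Definition letter_sum (w : seq nat) : nat := sumn w.

Definition embeds_at (u w : seq nat) (i : nat) : bool :=
  (i + size u <= size w) &&
  all (fun k => nth 0 u k <= nth 0 w (i + k)) (iota 0 (size u)).

Definition embeds (u w : seq nat) : bool :=
  has (embeds_at u w) (iota 0 (size w).+1).

Definition inS (u w : seq nat) : bool :=
  (size u <= size w) && embeds_at u w (size w - size u) &&
  all (fun i => (i == size w - size u) || ~~ embeds_at u w i)
      (iota 0 (size w).+1).

From mathcomp Require Import all_boot zify.
Set Implicit Arguments. Unset Strict Implicit. Unset Printing Implicit Defensive.

(* A letter of a positive word is at least 1, so 121 embeds at position i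
   exactly when the letter at i+1 exists, is at least 2, and has a letter on
   either side.  Hence the words avoiding 121 are those of length at most 1
   together with the words a 1^j b, and the words of S(121) are exactly the
   words a 1^j b c with b >= 2 (an interior letter >= 2 anywhere else would
   give a second embedding).  Subtracting the forced minimum from each block turns
   these into weak compositions of n - 2 into 3 parts, resp. of n - 1 into 4
   parts, counted by C(n, 2) and C(n + 2, 3). *)

Definition incr_head (t : seq nat) := (head 0 t).+1 :: behead t.

Fixpoint compositions k : nat -> seq (seq nat) :=
  match k with
  | 0 => fun m => if m is 0 then [:: [::]] else [::]
  | k'.+1 => fix comps_S m :=
      match m with
      | 0 => map (cons 0) (compositions k' 0)
      | m'.+1 => map (cons 0) (compositions k' m) ++ map incr_head (comps_S m')
      end
  end.

Lemma compositions_S0 k : compositions k.+1 0 = map (cons 0) (compositions k 0).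
Proof. by []. Qed.

Lemma compositions_SS k m :
  compositions k.+1 m.+1 =
  map (cons 0) (compositions k m.+1) ++ map incr_head (compositions k.+1 m).
Proof. by []. Qed.

Lemma mem_compositions k m t :
  (t \in compositions k m) = (size t == k) && (sumn t == m).
Proof.
elim: k m t => [|k IHk] m t; first by case: m; case: t => // *; rewrite inE.
elim: m t => [|m IHm] t.
  rewrite compositions_S0; apply/mapP/andP => [[t' + ->]|].
    by rewrite IHk /= eqSS => /andP[-> ->].
  case: t => [|x t] [] // /eqP[sz] /=; rewrite addn_eq0 => /andP[/eqP-> sm].
  by exists t; rewrite // IHk sz eqxx.
rewrite compositions_SS mem_cat; apply/orP/andP => [[]|].
- by case/mapP=> t' + ->; rewrite IHk /= eqSS; case/andP=> -> ->.
- case/mapP=> -[|y t'] + ->; rewrite IHm //=.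
  by case/andP=> -> /eqP<-; rewrite addSn.
case: t => [|[|x] t] [] // /eqP[sz] /= sm; [left | right]; apply/mapP.
  by exists t; rewrite // IHk sz eqxx.
by exists (x :: t); rewrite // IHm /= eqSS sz eqxx.
Qed.

Lemma uniq_compositions k m : uniq (compositions k m).
Proof.
elim: k m => [|k IHk] m; first by case: m.
have cons0_inj : injective (cons 0) by move=> ? ? [].
elim: m => [|m IHm]; first by rewrite compositions_S0 map_inj_uniq.
rewrite compositions_SS cat_uniq map_inj_uniq // IHk andTb.
rewrite map_inj_in_uniq ?IHm ?andbT; last first.
  by move=> [|? ?] [|? ?]; rewrite !mem_compositions // => _ _ [-> ->].
by apply/hasPn => _ /mapP[t _ ->]; apply/negP => /mapP[? _ []].
Qed.

Lemma size_compositions k m : size (compositions k.+1 m) = 'C(m + k, k).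
Proof.
elim: k m => [|k IHk] m.
  by elim: m => // m IHm; rewrite compositions_SS size_cat !size_map IHm !bin0.
elim: m => [|m IHm]; first by rewrite compositions_S0 size_map IHk !binn.
by rewrite compositions_SS size_cat !size_map IHm IHk addSnnS [m.+1 + _]addSn binS addnC.
Qed.

Lemma pword_nth w i : pword w -> i < size w -> 0 < nth 0 w i.
Proof. by move/(all_nthP 0); apply. Qed.

Lemma size_le_sumn w : pword w -> size w <= sumn w.
Proof. by elim: w => //= x w IHw /andP[x_gt0 /IHw]; rewrite -add1n; apply: leq_add. Qed.

Definition ones_word a j e := a.+1 :: nseq j 1 ++ e.

Lemma pword_ones_word a j e : pword (ones_word a j e) = pword e.
Proof. by rewrite /pword /= all_cat all_nseq orbT. Qed.

Lemma sumn_ones_word a j e : sumn (ones_word a j e) = a.+1 + j + sumn e.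
Proof. by rewrite /= sumn_cat sumn_nseq mul1n addnA. Qed.

Lemma size_ones_word a j e : size (ones_word a j e) = j.+1 + size e.
Proof. by rewrite /= size_cat size_nseq. Qed.

Lemma nth_ones_word a j e i :
  nth 0 (ones_word a j e) i.+1 = if i < j then 1 else nth 0 e (i - j).
Proof. by rewrite /= nth_cat size_nseq nth_nseq; case: (i < j). Qed.

Lemma ones_word_inj a j e a' j' e' : size e = size e' ->
  ones_word a j e = ones_word a' j' e' -> [/\ a = a', j = j' & e = e'].
Proof.
move=> se [-> eq_cat]; have jj' : j = j'.
  by move/(congr1 size): eq_cat; rewrite !size_cat !size_nseq se => /addIn.
by subst j'; move/eqP: eq_cat; rewrite eqseq_cat ?size_nseq // eqxx => /eqP.
Qed.

Local Notation u121 := [:: 1; 2; 1].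

Lemma embeds_at_121 w i : pword w ->
  embeds_at u121 w i = (i + 3 <= size w) && (1 < nth 0 w i.+1).
Proof.
rewrite /embeds_at /= addn0 addn1 => pw; case: (leqP (i + 3)) => //= i3_le.
by rewrite !(pword_nth pw) ?andbT //; lia.
Qed.

Lemma embeds_at_121_interior x mid e i :
  pword (x :: mid ++ e) -> 0 < size e -> i < size mid ->
  embeds_at u121 (x :: mid ++ e) i = (1 < nth 0 mid i).
Proof.
move=> pw e_gt0 lt_i; rewrite embeds_at_121 //= size_cat nth_cat lt_i.
by suff -> : i + 3 <= (size mid + size e).+1 by []; lia.
Qed.

Lemma interior_ones x mid e :
  pword (x :: mid ++ e) -> 0 < size e ->
  (forall i, i < size mid -> ~~ embeds_at u121 (x :: mid ++ e) i) ->
  x :: mid ++ e = ones_word x.-1 (size mid) e.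
Proof.
move=> pw e_gt0 no_emb; rewrite /ones_word prednK; last by case/andP: pw.
congr (_ :: _ ++ _); apply/all_pred1P/(all_nthP 0) => i lt_i.
have := no_emb i lt_i; rewrite embeds_at_121_interior //.
have : 0 < nth 0 mid i.
  by move: pw; rewrite /pword /= all_cat => /and3P[_ /pword_nth pmid _]; apply: pmid.
by case: (nth 0 mid i) => [|[|]].
Qed.

Lemma avoids_121_shape w : pword w -> 1 < size w -> ~~ embeds u121 w ->
  exists a j b, w = ones_word a j [:: b.+1].
Proof.
case: w => [|x w] // pw; case/lastP: w pw => [|mid y] // pw _ /hasPn no_emb.
rewrite -cats1 in pw no_emb *.
have y_gt0 : 0 < y by move: pw; rewrite /pword /= all_cat /= => /and3P[_ _ /andP[]].
exists x.-1, (size mid), y.-1; rewrite prednK //; apply: interior_ones => // i lt_i.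
by apply: no_emb; rewrite mem_iota /= size_cat /=; lia.
Qed.

Lemma ones_word_avoids_121 a j b : ~~ embeds u121 (ones_word a j [:: b.+1]).
Proof.
apply/hasPn => i _; rewrite embeds_at_121 ?pword_ones_word //.
rewrite size_ones_word nth_ones_word; case: (ltnP i j) => [_|j_le_i] /=; lia.
Qed.

Lemma ones_word_inS_121 a j b c : inS u121 (ones_word a j [:: b.+2; c.+1]).
Proof.
have pw : pword (ones_word a j [:: b.+2; c.+1]) by rewrite pword_ones_word.
have size_w : size (ones_word a j [:: b.+2; c.+1]) = j + 3.
  by rewrite size_ones_word addSnnS.
rewrite /inS size_w addnK leq_addl (embeds_at_121 _ pw) size_w leqnn.
rewrite nth_ones_word ltnn subnn andTb; apply/allP => i _.
rewrite embeds_at_121 // size_w nth_ones_word.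
by case: (ltngtP i j) => //=; lia.
Qed.

Lemma inS_121_shape w : pword w -> inS u121 w ->
  exists a j b c, w = ones_word a j [:: b.+2; c.+1].
Proof.
case: w => [|x w] //; case/lastP: w => [|w z] //; case/lastP: w => [|mid y] // pw.
rewrite -!cats1 -catA in pw *; set w := x :: _ in pw *.
have size_w : size w = size mid + 3 by rewrite /w /= size_cat /=; lia.
have nth_w : nth 0 w (size mid).+1 = y by rewrite /w /= nth_cat ltnn subnn.
rewrite /inS size_w addnK leq_addl (embeds_at_121 _ pw) size_w leqnn nth_w.
case/andP=> y_gt1 /allP only_last.
have z_gt0 : 0 < z by move: pw; rewrite /pword /= all_cat => /and3P[_ _ /and3P[]].
exists x.-1, (size mid), (y - 2), z.-1.
have -> : [:: (y - 2).+2; z.-1.+1] = [:: y; z] by congr [:: _; _]; lia.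
apply: interior_ones => // i lt_i; have := only_last i.
by rewrite mem_iota (ltn_eqF lt_i); apply; lia.
Qed.

Lemma embeds_size u w : embeds u w -> size u <= size w.
Proof. by case/hasP=> i _ /andP[+ _]; apply: leq_trans; rewrite leq_addl. Qed.

Lemma pword_sumn_le1 w : pword w -> sumn w <= 1 -> w = nseq (sumn w) 1.
Proof.
move=> pw sum_le1; have := leq_trans (size_le_sumn pw) sum_le1.
by case: w pw sum_le1 => [|[|[|x]] [|y w]] //=; rewrite addn0.
Qed.

Definition avoid121_word (t : seq nat) :=
  if t is [:: a; j; b] then ones_word a j [:: b.+1] else [::].

Definition inS121_word (t : seq nat) :=
  if t is [:: a; j; b; c] then ones_word a j [:: b.+2; c.+1] else [::].

Lemma count_avoid_121 n : exists s : seq (seq nat),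
  [/\ uniq s,
      forall w, (w \in s) = [&& pword w, letter_sum w == n & ~~ embeds u121 w]
    & size s = 'C(n, 2) + 1].
Proof.
rewrite /letter_sum; have [n_le1 | ] := leqP n 1.
  exists [:: nseq n 1]; split; rewrite ?bin_small // => w; rewrite inE.
  apply/eqP/and3P => [-> | [pw /eqP sum_w _]]; last first.
    by rewrite -sum_w; apply: pword_sumn_le1; rewrite ?sum_w.
  rewrite /pword all_nseq sumn_nseq mul1n eqxx orbT; split=> //.
  by apply/negP => /embeds_size; rewrite size_nseq /=; lia.
case: n => [|[|n]] // _.
exists ([:: n.+2] :: map avoid121_word (compositions 3 n)); split.
- rewrite cons_uniq map_inj_in_uniq ?uniq_compositions ?andbT.
    apply/mapP => -[[|a [|j [|b []]]]] //; rewrite mem_compositions //.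
    by move=> _ /(congr1 size); rewrite size_ones_word addn1.
  move=> t t'; rewrite !mem_compositions => /andP[+ _] /andP[+ _].
  case: t => [|a [|j [|b []]]] //; case: t' => [|a' [|j' [|b' []]]] // _ _.
  by case/ones_word_inj => // -> -> [->].
- move=> w; rewrite inE; apply/orP/and3P => [[/eqP-> | ] | [pw /eqP sum_w no_emb]].
  + by split=> //=; rewrite addn0.
  + case/mapP=> t + ->; rewrite mem_compositions.
    case: t => [|a [|j [|b []]]] // /andP[_ /eqP sum_t].
    rewrite pword_ones_word sumn_ones_word ones_word_avoids_121; split=> //.
    by rewrite -sum_t /=; lia.
  case: (ltnP 1 (size w)) => [w_gt1 | w_le1].
    right; have [a [j [b w_eq]]] := avoids_121_shape pw w_gt1 no_emb.
    rewrite w_eq sumn_ones_word /= in sum_w.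
    by apply/mapP; exists [:: a; j; b]; rewrite // mem_compositions /=; lia.
  by left; case: w w_le1 sum_w {pw no_emb} => [|x []] //= _ <-; rewrite addn0.
rewrite -[in 'C(_, _)]addn2 -(size_compositions 2 n) addn1.
by rewrite -(size_map avoid121_word (compositions 3 n)).
Qed.

Lemma count_inS_121 n : exists s : seq (seq nat),
  [/\ uniq s,
      forall w, (w \in s) = [&& pword w, letter_sum w == n.+4 & inS u121 w]
    & size s = 'C(n.+3, 3)].
Proof.
exists (map inS121_word (compositions 4 n)); split.
- rewrite map_inj_in_uniq ?uniq_compositions //.
  move=> t t'; rewrite !mem_compositions => /andP[+ _] /andP[+ _].
  case: t => [|a [|j [|b [|c []]]]] //; case: t' => [|a' [|j' [|b' [|c' []]]]] // _ _.
  by case/ones_word_inj => // -> -> [-> ->].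
- move=> w; apply/mapP/and3P => [[t + ->] | [pw /eqP sum_w w_inS]].
    rewrite mem_compositions; case: t => [|a [|j [|b [|c []]]]] // /andP[_ /eqP sum_t].
    rewrite /letter_sum pword_ones_word sumn_ones_word ones_word_inS_121; split=> //.
    by rewrite -sum_t /=; lia.
  have [a [j [b [c w_eq]]]] := inS_121_shape pw w_inS.
  rewrite w_eq /letter_sum sumn_ones_word /= in sum_w.
  by exists [:: a; j; b; c]; rewrite // mem_compositions /=; lia.
by rewrite size_map size_compositions addn3.
Qed.

Theorem mainTheorem13 :
  (forall n : nat, exists s : seq (seq nat),
     [/\ uniq s,
         (forall w, (w \in s) =
            [&& pword w, letter_sum w == n & ~~ embeds [:: 1; 2; 1] w])
       & size s = (n * (n - 1)) %/ 2 + 1]) /\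
  (forall n : nat, 1 <= n -> exists s : seq (seq nat),
     [/\ uniq s,
         (forall w, (w \in s) =
            [&& pword w, letter_sum w == 3 + n & inS [:: 1; 2; 1] w])
       & size s = (n * (n + 1) * (n + 2)) %/ 6]).
Proof.
split=> [n | [//|n] _].
  have [s [s_uniq mem_s size_s]] := count_avoid_121 n.
  by exists s; rewrite size_s bin2 divn2 subn1.
have [s [s_uniq mem_s size_s]] := count_inS_121 n.
exists s; split=> //; rewrite size_s bin_ffactd; congr (_ %/ _).
by rewrite !ffactnS ffactn0; nia.
Qed.
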